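(* Let $A\in\mathbb{R}^{m\times n}$ be semi-monotone (i.e. $A^{\dagger}\geq 0$). Let $A=B-C$ be a proper weak regular splitting and $A=U-V$ a proper regular splitting of $A$. If $A\geq 0$ and $B^{\dagger}\geq U^{\dagger}$, then $$\rho(B^{\dagger}C)\leq \rho(U^{\dagger}V)<1.$$
   Context: All matrices are real. $X^{\dagger}$ denotes the Moore–Penrose inverse of $X$, and $\rho(\cdot)$ the spectral radius. For a matrix $X$, $X\geq 0$ means that all entries of $X$ are nonnegative and at least one entry is positive; $X\geq Y$ means $X-Y\geq 0$. $R(X)$ and $N(X)$ denote range and null space. A splitting $A=U-V$ is proper if $R(U)=R(A)$ and $N(U)=N(A)$. It is a proper regular splitting if it is proper, $U^{\dagger}\geq 0$ and $V\geq 0$; it is a proper weak regular splitting if it is proper, $U^{\dagger}\geq 0$ and $U^{\dagger}V\geq 0$. *)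

From HB Require Import structures.
From mathcomp Require Import all_boot all_order all_algebra.
From mathcomp Require Import complex.
From Stdlib Require Import ClassicalEpsilon.
Set Implicit Arguments. Unset Strict Implicit. Unset Printing Implicit Defensive.
Import Order.TTheory GRing.Theory Num.Theory.
Local Open Scope ring_scope.

Section Defs.
Variable R : rcfType.

Definition is_mpinv m n (A : 'M[R]_(m, n)) (X : 'M[R]_(n, m)) : Prop :=
  [/\ A *m X *m A = A, X *m A *m X = X, (A *m X)^T = A *m X & (X *m A)^T = X *m A].

(* The Moore-Penrose inverse A^dagger (it exists and is unique; chosen by epsilon) *)
Definition mpinv m n (A : 'M[R]_(m, n)) : 'M[R]_(n, m) :=
  epsilon (inhabits 0) (fun X => is_mpinv A X).

(* X >= 0 : all entries nonnegative and at least one entry positive *)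
Definition mx_nonneg m n (X : 'M[R]_(m, n)) : Prop :=
  (forall i j, 0 <= X i j) /\ (exists i j, 0 < X i j).

Definition mx_ge m n (X Y : 'M[R]_(m, n)) : Prop := mx_nonneg (X - Y).

Definition mx_range m n (X : 'M[R]_(m, n)) (y : 'cV[R]_m) : Prop :=
  exists x : 'cV[R]_n, y = X *m x.
Definition mx_null m n (X : 'M[R]_(m, n)) (x : 'cV[R]_n) : Prop :=
  X *m x = 0.

Definition proper_splitting m n (A U V : 'M[R]_(m, n)) : Prop :=
  [/\ A = U - V,
      (forall y, mx_range U y <-> mx_range A y) &
      (forall x, mx_null U x <-> mx_null A x)].

Definition proper_regular_splitting m n (A U V : 'M[R]_(m, n)) : Prop :=
  [/\ proper_splitting A U V, mx_nonneg (mpinv U) & mx_nonneg V].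

Definition proper_weak_regular_splitting m n (A U V : 'M[R]_(m, n)) : Prop :=
  [/\ proper_splitting A U V, mx_nonneg (mpinv U) & mx_nonneg (mpinv U *m V)].

Definition eigenvalues n (X : 'M[R]_n) : seq R[i] :=
  sval (closed_field_poly_normal (char_poly (map_mx (fun x : R => (x%:C)%C) X))).

(* spectral radius: the largest modulus of an eigenvalue (0 for empty matrices) *)
Definition spectral_radius n (X : 'M[R]_n) : R :=
  \big[Num.max/0]_(z <- eigenvalues X) Normc.normc z.

End Defs.

From HB Require Import structures.
From mathcomp Require Import all_boot all_order all_algebra.
From mathcomp Require Import complex reals.
From Stdlib Require Import ClassicalEpsilon.
Import Order.TTheory GRing.Theory Num.Theory.
Local Open Scope ring_scope.
Set Implicit Arguments. Unset Strict Implicit. Unset Printing Implicit Defensive.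

(* Proper splittings share the projectors of A: U^+ U = A^+ A and U U^+ = A A^+.
   Hence U^+ V = A^+ A - U^+ A and B^+ C = A^+ A - B^+ A, so U^+ V - B^+ C = (B^+ - U^+) A
   is nonnegative, and the first inequality follows from the monotonicity of the spectral
   radius on nonnegative matrices.  Monotonicity comes from the Collatz-Wielandt bound:
   if X >= 0, w >= 0, w <> 0 and w X >= mu w, then w X^k >= mu^k w, while X^k = O(q^k)
   for every q > rho(X) (triangularize X by Schur and scale its off-diagonal part away),
   so mu <= rho(X).
   For the second inequality, (I - U^+ V)(I + A^+ V) = I with U^+ V >= 0 and
   I + A^+ V >= 0.  An eigenvalue z of U^+ V with |z| >= 1 would yield w >= 0, w <> 0
   with w (I - U^+ V) <= 0, whence w = w (I - U^+ V)(I + A^+ V) <= 0. *)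

Section MatrixFacts.
Variable R : pzRingType.

Lemma col_mulmx m n p (A : 'M[R]_(m, n)) (B : 'M[R]_(n, p)) j :
  col j (A *m B) = A *m col j B.
Proof. by apply/colP => i; rewrite !mxE; apply: eq_bigr => l _; rewrite !mxE. Qed.

Lemma col_matrixP m n (A B : 'M[R]_(m, n)) : (forall j, col j A = col j B) -> A = B.
Proof. by move=> eqAB; apply: trmx_inj; apply/row_matrixP => j; rewrite -!tr_col eqAB. Qed.

Lemma exprn_conj (x y a : R) k : x * y = 1 -> y * x = 1 ->
  (x * a * y) ^+ k = x * a ^+ k * y.
Proof.
move=> xy yx; elim: k => [|k IHk]; first by rewrite !expr0 mulr1.
by rewrite exprS IHk !mulrA -(mulrA (x * a) y x) yx mulr1 -(mulrA x a) -exprS.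
Qed.

End MatrixFacts.

Lemma mulmx_ge0 (R : numDomainType) m n p (X : 'M[R]_(m, n)) (Y : 'M[R]_(n, p)) :
  (forall i j, 0 <= X i j) -> (forall i j, 0 <= Y i j) -> forall i j, 0 <= (X *m Y) i j.
Proof. by move=> X0 Y0 i j; rewrite mxE; apply: sumr_ge0 => k _; apply: mulr_ge0. Qed.

Section MoorePenrose.
Variable R : rcfType.

Lemma mulmx_tr_eq0 m (y : 'rV[R]_m) : y *m y^T = 0 -> y = 0.
Proof.
move=> /matrixP /(_ 0 0); rewrite !mxE => sum_sq0; apply/rowP => j; rewrite mxE.
have /psumr_eq0P sq0 : \sum_k y 0 k ^+ 2 = 0.
  by rewrite -[RHS]sum_sq0; apply: eq_bigr => k _; rewrite mxE expr2.
by apply/eqP; rewrite -sqrf_eq0; apply/eqP/sq0 => // k _; apply: sqr_ge0.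
Qed.

Lemma gram_unitmx r m (F : 'M[R]_(r, m)) : row_free F -> F *m F^T \in unitmx.
Proof.
move=> freeF; rewrite unitmxE unitfE; apply/negP => /det0P [v v_neq0 vFF0].
have vF0 : v *m F = 0.
  by apply: mulmx_tr_eq0; rewrite trmx_mul mulmxA -(mulmxA v) vFF0 mul0mx.
by move/eqP: vF0; rewrite mulmx_free_eq0 // (negbTE v_neq0).
Qed.

Lemma is_mpinv_rank_factor r m n (F : 'M[R]_(r, m)) (G : 'M[R]_(r, n)) :
  row_free F -> row_free G ->
  is_mpinv (F^T *m G) (G^T *m invmx (G *m G^T) *m invmx (F *m F^T) *m F).
Proof.
move=> freeF freeG.
set P := invmx (F *m F^T); set Q := invmx (G *m G^T).
have uP := gram_unitmx freeF; have uQ := gram_unitmx freeG.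
have PT : P^T = P by rewrite /P trmx_inv trmx_mul trmxK.
have QT : Q^T = Q by rewrite /Q trmx_inv trmx_mul trmxK.
have AX : F^T *m G *m (G^T *m Q *m P *m F) = F^T *m P *m F.
  by rewrite !mulmxA -[F^T *m G *m G^T]mulmxA -[F^T *m _ *m Q]mulmxA mulmxV // mulmx1.
have XA : G^T *m Q *m P *m F *m (F^T *m G) = G^T *m Q *m G.
  by rewrite !mulmxA -(mulmxA _ F) -(mulmxA (G^T *m Q) P) mulVmx // mulmx1.
split.
- by rewrite AX !mulmxA -[F^T *m P *m F *m F^T]mulmxA -[F^T *m P *m _]mulmxA mulVmx // mulmx1.
- by rewrite XA !mulmxA -[G^T *m Q *m G *m G^T]mulmxA -[G^T *m Q *m _]mulmxA mulVmx // mulmx1.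
- by rewrite AX !trmx_mul trmxK PT mulmxA.
- by rewrite XA !trmx_mul trmxK QT mulmxA.
Qed.

Lemma mpinv_exists m n (A : 'M[R]_(m, n)) : exists X, is_mpinv A X.
Proof.
have freeF : row_free (col_base A)^T by rewrite /row_free mxrank_tr; apply: col_base_full.
have := is_mpinv_rank_factor freeF (row_base_free A).
by rewrite trmxK mulmx_base; apply: ex_intro.
Qed.

Lemma mpinvP m n (A : 'M[R]_(m, n)) : is_mpinv A (mpinv A).
Proof. exact: epsilon_spec (mpinv_exists A). Qed.

Variables m n : nat.
Implicit Type A : 'M[R]_(m, n).

Lemma mulmx_mpinvK A : A *m mpinv A *m A = A.
Proof. by case: (mpinvP A). Qed.

Lemma mpinv_mulmxK A : mpinv A *m A *m mpinv A = mpinv A.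
Proof. by case: (mpinvP A). Qed.

Lemma trmx_mulmx_mpinv A : (A *m mpinv A)^T = A *m mpinv A.
Proof. by case: (mpinvP A). Qed.

Lemma trmx_mpinv_mulmx A : (mpinv A *m A)^T = mpinv A *m A.
Proof. by case: (mpinvP A). Qed.

Lemma mx_range_mpinv A y : mx_range A y -> A *m mpinv A *m y = y.
Proof. by case=> x ->; rewrite mulmxA mulmx_mpinvK. Qed.

End MoorePenrose.

Section ProperSplitting.
Variables (R : rcfType) (m n : nat) (A U V : 'M[R]_(m, n)).
Hypothesis splitAUV : proper_splitting A U V.

Lemma proper_splitting_subr : V = U - A.
Proof. by have [-> _ _] := splitAUV; rewrite opprB addrC subrK. Qed.

Lemma proper_splitting_mulmx_eq0 p (M : 'M[R]_(n, p)) : U *m M = 0 <-> A *m M = 0.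
Proof.
have [_ _ eqN] := splitAUV.
have colsP (X : 'M[R]_(m, p)) : X = 0 <-> forall j, col j X = 0.
  split=> [-> j|X0]; first by apply/colP => i; rewrite !mxE.
  by apply: col_matrixP => j; rewrite X0; apply/colP => i; rewrite !mxE.
by rewrite !colsP; split=> M0 j; rewrite col_mulmx; apply/eqN; rewrite /mx_null -col_mulmx M0.
Qed.

Lemma proper_splitting_range : A *m mpinv A *m U = U /\ U *m mpinv U *m A = A.
Proof.
have [_ eqR _] := splitAUV.
by split; apply: col_matrixP => j; rewrite !col_mulmx; apply: mx_range_mpinv;
  apply/eqR; exists (col j 1%:M); rewrite -col_mulmx mulmx1.
Qed.

(* Symmetric P, Q with P Q = P and Q P = Q coincide: Q = (Q P)^T = P Q = P. *)
Lemma proper_mpinv_mulmx : mpinv U *m U = mpinv A *m A.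
Proof.
set P := mpinv A *m A; set Q := mpinv U *m U.
have UP : U *m P = U.
  apply/eqP; rewrite -subr_eq0 -{2}[U]mulmx1 -mulmxBr; apply/eqP/proper_splitting_mulmx_eq0.
  by rewrite mulmxBr mulmx1 mulmxA mulmx_mpinvK subrr.
have AQ : A *m Q = A.
  apply/eqP; rewrite -subr_eq0 -{2}[A]mulmx1 -mulmxBr; apply/eqP/proper_splitting_mulmx_eq0.
  by rewrite mulmxBr mulmx1 mulmxA mulmx_mpinvK subrr.
have QP : Q *m P = Q by rewrite -mulmxA UP.
have PQ : P *m Q = P by rewrite -mulmxA AQ.
have symP : P^T = P by apply: trmx_mpinv_mulmx.
have symQ : Q^T = Q by apply: trmx_mpinv_mulmx.
by rewrite -symQ -QP trmx_mul symP symQ PQ.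
Qed.

Lemma proper_mulmx_mpinv : U *m mpinv U = A *m mpinv A.
Proof.
have [QU PA] := proper_splitting_range.
set P := U *m mpinv U; set Q := A *m mpinv A.
have QP : Q *m P = P by rewrite mulmxA QU.
have PQ : P *m Q = Q by rewrite mulmxA PA.
have symP : P^T = P by apply: trmx_mulmx_mpinv.
have symQ : Q^T = Q by apply: trmx_mulmx_mpinv.
by rewrite -symP -QP trmx_mul symP symQ PQ.
Qed.

Lemma proper_iteration_mx : mpinv U *m V = mpinv A *m A - mpinv U *m A.
Proof. by rewrite proper_splitting_subr mulmxBr proper_mpinv_mulmx. Qed.

Lemma proper_iteration_inverse :
  (1%:M - mpinv U *m V) *m (1%:M + mpinv A *m V) = 1%:M.
Proof.
have TAd : mpinv U *m V *m mpinv A = mpinv A - mpinv U.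
  rewrite proper_splitting_subr mulmxBr mulmxBl proper_mpinv_mulmx mpinv_mulmxK.
  by rewrite -mulmxA -proper_mulmx_mpinv mulmxA mpinv_mulmxK.
rewrite mulmxBl mul1mx mulmxDr mulmx1 mulmxA TAd mulmxBl.
by rewrite [X in _ - X]addrC subrK addrK.
Qed.

End ProperSplitting.

Section InfNorm.
Variable C : numFieldType.

Definition inf_norm_le p q (Y : 'M[C]_(p, q)) c := forall i, \sum_j `|Y i j| <= c.

Lemma inf_norm_le_exists p q (Y : 'M[C]_(p, q)) : exists2 c, 0 <= c & inf_norm_le Y c.
Proof.
exists (\sum_i \sum_j `|Y i j|); first by do 2!apply: sumr_ge0 => ? _.
move=> i; rewrite (bigD1 i) //= lerDl; by do 2!apply: sumr_ge0 => ? _.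
Qed.

Lemma inf_norm_le_entry p q (Y : 'M[C]_(p, q)) c i j : inf_norm_le Y c -> `|Y i j| <= c.
Proof. by move/(_ i); apply: le_trans; rewrite (bigD1 j) //= lerDl sumr_ge0. Qed.

Lemma inf_norm_le_mul p q r (Y : 'M[C]_(p, q)) (Z : 'M[C]_(q, r)) a b :
  0 <= b -> inf_norm_le Y a -> inf_norm_le Z b -> inf_norm_le (Y *m Z) (a * b).
Proof.
move=> b0 Ya Zb i; apply: le_trans (_ : \sum_j \sum_l `|Y i l| * `|Z l j| <= _).
  by apply: ler_sum => j _; rewrite mxE; apply: le_trans (ler_norm_sum _ _ _) _;
    apply: ler_sum => l _; rewrite normrM.
rewrite exchange_big /=; apply: le_trans (_ : \sum_l `|Y i l| * b <= _).
  by apply: ler_sum => l _; rewrite -mulr_sumr ler_wpM2l.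
by rewrite -mulr_suml ler_wpM2r.
Qed.

Lemma inf_norm_le1 n : inf_norm_le (1%:M : 'M[C]_n) 1.
Proof.
move=> i; rewrite (bigD1 i) //= big1 => [|j /negbTE ji]; rewrite mxE.
  by rewrite eqxx normr1 addr0.
by rewrite eq_sym ji normr0.
Qed.

Lemma inf_norm_le_exp n (Y : 'M[C]_n) c k :
  0 <= c -> inf_norm_le Y c -> inf_norm_le (Y ^+ k) (c ^+ k).
Proof.
move=> c0 Yc; elim: k => [|k IHk]; first exact: inf_norm_le1.
by rewrite !exprS; apply: inf_norm_le_mul; rewrite ?exprn_ge0.
Qed.

(* Conjugating by diag(eps^i) multiplies the entry (i, j) by eps^(i - j): for a small
   eps the strictly lower part of D no longer counts. *)
Lemma trig_inf_norm_scale n (D : 'M[C]_n) r q :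
  is_trig_mx D -> 0 <= r -> r < q -> (forall i, `|D i i| <= r) ->
  exists E F : 'M[C]_n, [/\ E *m F = 1%:M, F *m E = 1%:M & inf_norm_le (E *m D *m F) q].
Proof.
move=> /is_trig_mxP Dtrig r0 rq Dii.
have [c c0 Dc] := inf_norm_le_exists D.
have d0 : 0 < q - r by rewrite subr_gt0.
have cd0 : 0 < c + (q - r) by rewrite ltr_wpDl.
pose eps := (q - r) / (c + (q - r)).
have eps0 : 0 < eps by rewrite divr_gt0.
have eps_le1 : eps <= 1 by rewrite ler_pdivrMr // mul1r lerDr.
have eps_c : eps * c <= q - r.
  by rewrite mulrAC ler_pdivrMr // ler_wpM2l ?lerDl ?(ltW d0).
pose E : 'M[C]_n := diag_mx (\row_i eps ^+ i).
pose F : 'M[C]_n := diag_mx (\row_i eps^-1 ^+ i).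
have epsK i : eps ^+ i * eps^-1 ^+ i = 1 by rewrite exprVn mulfV ?expf_neq0 ?gt_eqF.
exists E, F; split.
- by rewrite mulmx_diag -diag_const_mx; congr diag_mx; apply/rowP => i; rewrite !mxE epsK.
- by rewrite mulmx_diag -diag_const_mx; congr diag_mx; apply/rowP => i; rewrite !mxE mulrC epsK.
have EDF i j : `|(E *m D *m F) i j| <= (i == j)%:R * r + eps * `|D i j|.
  rewrite mul_mx_diag mul_diag_mx !mxE mulrAC normrM [`|_ * _|]ger0_norm; last first.
    by rewrite mulr_ge0 ?exprn_ge0 ?invr_ge0 ?ltW.
  case: (ltngtP i j) => [ij|ji|/val_inj ->].
  - by rewrite Dtrig // normr0 !mulr0 addr0 mulr_ge0 ?ler0n.
  - rewrite -[i == j]/(val i == val j) (gtn_eqF ji) mul0r add0r ler_wpM2r //.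
    rewrite -(subnK (ltnW ji)) exprD -mulrA epsK mulr1.
    by rewrite -[leRHS]expr1; apply: (ler_wiXn2l (ltW eps0) eps_le1); rewrite subn_gt0.
  - rewrite eqxx mul1r epsK mul1r; apply: le_trans (Dii j) _.
    by rewrite lerDl mulr_ge0 ?(ltW eps0).
move=> i; apply: le_trans (ler_sum _ (fun j _ => EDF i j)) _.
rewrite big_split /= -mulr_sumr (bigD1 i) //= eqxx mul1r big1 => [|j /negbTE ij]; last first.
  by rewrite eq_sym ij mul0r.
rewrite addr0 -(subrK r q) [leLHS]addrC lerD2r; apply: le_trans eps_c.
by rewrite ler_wpM2l ?(ltW eps0).
Qed.

End InfNorm.

Lemma trig_diag_eigenvalue (F : fieldType) n (D : 'M[F]_n) i :
  is_trig_mx D -> eigenvalue D (D i i).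
Proof.
move=> Dtrig; rewrite eigenvalue_root_char char_poly_trig // /root horner_prod.
by rewrite (bigD1 i) //= hornerXsubC subrr mul0r.
Qed.

Lemma eigenvalue_exp_bound (C : numClosedFieldType) n (Y : 'M[C]_n) r q :
  0 <= r -> r < q -> (forall z, eigenvalue Y z -> `|z| <= r) ->
  exists2 K, 0 <= K & forall k i j, `|(Y ^+ k) i j| <= K * q ^+ k.
Proof.
move=> r0 rq Yr; case: n Y Yr => [|n] Y Yr; first by exists 0 => // k [].
have [P P_unitary Dtrig] := Schur Y (ltn0Sn n).
have Pu : P \in unitmx := unitarymx_unit P_unitary.
set D := conjmx P Y in Dtrig.
have Dii i : `|D i i| <= r.
  apply/Yr/(eigenvalue_conjmx (stablemx_unit _ Pu)); first by rewrite row_free_unit.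
  exact: trig_diag_eigenvalue.
have [E [F [EF FE Zq]]] := trig_inf_norm_scale Dtrig r0 rq Dii.
set L := invmx P *m F; set M := E *m P.
have LM : L *m M = 1%:M by rewrite mulmxA -(mulmxA _ F) FE mulmx1 mulVmx.
have ML : M *m L = 1%:M by rewrite mulmxA -(mulmxA _ P) mulmxV // mulmx1.
have defY : Y = L *m (E *m D *m F) *m M.
  rewrite /D /conjmx pinvmxE // /L /M !mulmxA -(mulmxA _ F E) FE mulmx1 -mulmxA mulVmx //.
  by rewrite mulmx1 -(mulmxA _ F E) FE mulmx1 mulVmx // mul1mx.
have [a a0 La] := inf_norm_le_exists L.
have [b b0 Mb] := inf_norm_le_exists M.
have q0 : 0 <= q := le_trans r0 (ltW rq).
exists (a * b); first exact: mulr_ge0.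
move=> k i j; rewrite defY exprn_conj // mulrAC; apply: inf_norm_le_entry.
apply: inf_norm_le_mul b0 _ Mb; apply: inf_norm_le_mul La _; first exact: exprn_ge0.
exact: inf_norm_le_exp.
Qed.

Section SpectralRadius.
Variable R : rcfType.
Local Notation normc := (@Normc.normc R).
Local Notation toC := (map_mx (real_complex R)).

Lemma normr_real_complex (x : R) : `|x%:C%C| = `|x|%:C%C.
Proof. by rewrite normc_def /= expr0n addr0 sqrtr_sqr. Qed.

Lemma normc_ge0 (z : R[i]) : 0 <= normc z.
Proof. by have := normr_ge0 z; rewrite -[`|z|]/((normc z)%:C%C) -lecR. Qed.

Lemma mem_eigenvalues n (X : 'M[R]_n) z : (z \in eigenvalues X) = eigenvalue (toC X) z.
Proof.
rewrite eigenvalue_root_char /eigenvalues; case: closed_field_poly_normal => s /= ->.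
by rewrite (monicP (char_poly_monic _)) scale1r root_prod_XsubC.
Qed.

Lemma spectral_radius_ge0 n (X : 'M[R]_n) : 0 <= spectral_radius X.
Proof. exact: bigmax_ge_id. Qed.

Lemma normc_le_spectral_radius n (X : 'M[R]_n) z :
  z \in eigenvalues X -> normc z <= spectral_radius X.
Proof. by move=> Xz; apply: le_bigmax_seq. Qed.

Lemma spectral_radius_exp_bound n (X : 'M[R]_n) q :
  spectral_radius X < q -> exists K, forall k i j, `|(X ^+ k) i j| <= K * q ^+ k.
Proof.
move=> Xq.
have [|||K K0 XK] :=
  eigenvalue_exp_bound (Y := toC X) (r := (spectral_radius X)%:C%C) (q := q%:C%C).
- by rewrite lecR spectral_radius_ge0.
- by rewrite ltcR.
- by move=> z; rewrite -mem_eigenvalues lecR; apply: normc_le_spectral_radius.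
exists (normc K) => k i j; rewrite -lecR rmorphM rmorphXn /= -normr_real_complex.
rewrite -[(normc K)%:C%C]/(`|K|) (ger0_norm K0).
have -> : ((X ^+ k) i j)%:C%C = (toC X ^+ k) i j by rewrite -rmorphXn mxE.
exact: XK.
Qed.

Lemma eigenvalue_subinvariant n (X : 'M[R]_n) z :
  (forall i j, 0 <= X i j) -> z \in eigenvalues X ->
  exists2 w : 'rV[R]_n, mx_nonneg w & forall j, normc z * w 0 j <= (w *m X) 0 j.
Proof.
move=> X0; rewrite mem_eigenvalues => /eigenvalueP [v vX v_neq0].
exists (\row_j normc (v 0 j)).
  have /existsP [j vj_neq0] : [exists j, v 0 j != 0].
    apply: contraNT v_neq0 => /existsPn v0; apply/eqP/rowP => j.
    by rewrite mxE; apply/eqP/negbNE.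
  split=> [i k|]; first by rewrite mxE normc_ge0.
  exists 0, j; rewrite mxE lt_def normc_ge0 andbT.
  by apply: contra vj_neq0 => /eqP /Normc.eq0_normc ->.
move=> j; rewrite -lecR !mxE rmorph_sum rmorphM /=.
have -> : (normc z)%:C%C * (normc (v 0 j))%:C%C = `|(v *m toC X) 0 j|.
  by rewrite vX mxE normrM.
rewrite mxE; apply: le_trans (ler_norm_sum _ _ _) _; apply: ler_sum => i _.
by rewrite !mxE rmorphM normrM normr_real_complex (ger0_norm (X0 i j)).
Qed.

Lemma spectral_radius_lt1 n (T M : 'M[R]_n) :
  (forall i j, 0 <= T i j) -> (forall i j, 0 <= M i j) -> (1%:M - T) *m M = 1%:M ->
  spectral_radius T < 1.
Proof.
move=> T0 M0 TM; rewrite /spectral_radius big_seq; apply: bigmax_lt => [|z Tz].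
  exact: ltr01.
have [w [w0 [i [j wj_gt0]]] zw] := eigenvalue_subinvariant T0 Tz.
rewrite (ord1 i) in wj_gt0; rewrite ltNge; apply: contraTN wj_gt0 => z_ge1.
have wIT_le0 k : (w *m (1%:M - T)) 0 k <= 0.
  rewrite mulmxBr mulmx1 2!mxE subr_le0; apply: le_trans (zw k).
  by rewrite ler_peMl ?w0.
rewrite -leNgt -[w]mulmx1 -TM mulmxA mxE; apply: sumr_le0 => k _.
exact: mulr_le0_ge0.
Qed.

End SpectralRadius.

Lemma bernoulli_ineq (R : realDomainType) (x : R) k : 0 <= x -> 1 + k%:R * x <= (1 + x) ^+ k.
Proof.
move=> x0; elim: k => [|k IHk]; first by rewrite mul0r addr0 expr0.
rewrite exprSr; apply: le_trans (_ : (1 + k%:R * x) * (1 + x) <= _); last first.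
  by rewrite ler_wpM2r ?addr_ge0.
rewrite mulrDr mulr1 mulrDl mul1r -natr1 mulrDl mul1r addrA lerD2l lerDl.
by rewrite !mulr_ge0 ?ler0n.
Qed.

Lemma exprn_unbounded (R : archiRealFieldType) (t c : R) : 1 < t -> exists k, c < t ^+ k.
Proof.
move=> t_gt1; have x0 : 0 < t - 1 by rewrite subr_gt0.
exists (Num.Def.archi_bound (`|c| / (t - 1))).
have := archi_boundP (divr_ge0 (normr_ge0 c) (ltW x0)); rewrite ltr_pdivrMr // => ck.
apply: le_lt_trans (ler_norm c) (lt_le_trans ck _).
by rewrite -[t in t ^+ _](subrKC 1); apply: le_trans (bernoulli_ineq _ (ltW x0)); rewrite lerDr.
Qed.

Section CollatzWielandt.
Variable R : archiRcfType.

Lemma row_subinvariant_exp n (X : 'M[R]_n) (w : 'rV[R]_n) mu :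
  (forall i j, 0 <= X i j) -> 0 <= mu -> (forall j, mu * w 0 j <= (w *m X) 0 j) ->
  forall k j, mu ^+ k * w 0 j <= (w *m X ^+ k) 0 j.
Proof.
move=> X0 mu0 wX; elim=> [|k IHk] j; first by rewrite expr0 mul1r mulmx1.
rewrite [X ^+ _]exprSr -[X ^+ k * X]/(X ^+ k *m X) mulmxA [mu ^+ _]exprSr -mulrA.
apply: le_trans (_ : mu ^+ k * (w *m X) 0 j <= _); first by rewrite ler_wpM2l ?exprn_ge0.
rewrite !mxE mulr_sumr; apply: ler_sum => a _; rewrite mulrA.
by rewrite ler_wpM2r ?X0 ?IHk.
Qed.

Lemma subinvariant_le_spectral_radius n (X : 'M[R]_n) (w : 'rV[R]_n) mu :
  (forall i j, 0 <= X i j) -> mx_nonneg w -> (forall j, mu * w 0 j <= (w *m X) 0 j) ->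
  mu <= spectral_radius X.
Proof.
move=> X0 [w0 [i [j0 wj0]]] wX; rewrite (ord1 i) in wj0.
rewrite leNgt; apply/negP => rho_lt_mu.
have [rho_q q_mu] := midf_lt rho_lt_mu.
set q := (spectral_radius X + mu) / 2 in rho_q q_mu.
have q0 : 0 < q := le_lt_trans (spectral_radius_ge0 X) rho_q.
have mu0 : 0 < mu := lt_trans q0 q_mu.
have [K XK] := spectral_radius_exp_bound rho_q.
have grow k : (mu / q) ^+ k * w 0 j0 <= (\sum_a w 0 a) * K.
  rewrite expr_div_n mulrAC ler_pdivrMr ?exprn_gt0 //.
  apply: le_trans (row_subinvariant_exp X0 (ltW mu0) wX k j0) _.
  rewrite mxE -mulrA mulr_suml; apply: ler_sum => a _; rewrite ler_wpM2l ?w0 //.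
  exact: le_trans (ler_norm _) (XK k a j0).
have t_gt1 : 1 < mu / q by rewrite ltr_pdivlMr // mul1r.
have [k] := exprn_unbounded ((\sum_a w 0 a) * K / w 0 j0) t_gt1.
by rewrite ltr_pdivrMr // ltNge grow.
Qed.

Lemma spectral_radius_le n (S T : 'M[R]_n) :
  (forall i j, 0 <= S i j) -> (forall i j, S i j <= T i j) ->
  spectral_radius S <= spectral_radius T.
Proof.
move=> S0 ST; rewrite {1}/spectral_radius big_seq; apply: bigmax_le => [|z Sz].
  exact: spectral_radius_ge0.
have [w [w0 w_pos] wS] := eigenvalue_subinvariant S0 Sz.
apply: (subinvariant_le_spectral_radius _ (conj w0 w_pos)) => [i j|j].
  exact: le_trans (S0 i j) (ST i j).
apply: le_trans (wS j) _; rewrite !mxE; apply: ler_sum => i _.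
by rewrite ler_wpM2l ?w0 ?ST.
Qed.

End CollatzWielandt.

Unset Implicit Arguments.
Set Strict Implicit.

Theorem theorem3p9 (R : realType) (m n : nat) (A B C U V : 'M[R]_(m, n)) :
  mx_nonneg (mpinv A) ->
  proper_weak_regular_splitting A B C ->
  proper_regular_splitting A U V ->
  mx_nonneg A ->
  mx_ge (mpinv B) (mpinv U) ->
  spectral_radius (mpinv B *m C) <= spectral_radius (mpinv U *m V) /\
  spectral_radius (mpinv U *m V) < 1.
Proof.
move=> [Ad0 _] [splitB _ [BdC0 _]] [splitU [Ud0 _] [V0 _]] [A0 _] [BdUd0 _].
split.
- have gap : mpinv U *m V - mpinv B *m C = (mpinv B - mpinv U) *m A.
    rewrite (proper_iteration_mx splitU) (proper_iteration_mx splitB).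
    by rewrite opprB addrC addrA subrK mulmxBl.
  apply: spectral_radius_le => // i j; rewrite -subr_ge0.
  by have := mulmx_ge0 BdUd0 A0 i j; rewrite -gap mxE [_ (- _) i j]mxE.
- apply: spectral_radius_lt1 (mulmx_ge0 Ud0 V0) _ (proper_iteration_inverse splitU).
  by move=> i j; rewrite mxE addr_ge0 ?mulmx_ge0 // mxE ler0n.
Qed.
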